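(* Assume $B\subseteq A\subsetneq[m]$. (a) If $q\ge3$, or $q=2$ and $|A|\le m-2$, then the dual code $\mathcal C_{\overline{\mathcal N}_2}^\perp$ is a linear code over $\mathbb F_q$ with parameters $\left[\frac{2q^{|B|+|C|}(q^m-q^{|A|})}{q-1},\ \frac{2q^{|B|+|C|}(q^m-q^{|A|})}{q-1}-2m-|C|,\ 3\right]$. (b) If $q=2$ and $|A|=m-1$, then $\mathcal C_{\overline{\mathcal N}_2}^\perp$ is a binary distance-optimal code with parameters $[2^{m+|B|+|C|},\ 2^{m+|B|+|C|}-2m-|C|,\ 4]$.
   Context: $q$ is a prime power, $\mathbb F_q$ the field of order $q$, $\mathbb F_q^*=\mathbb F_q\setminus\{0\}$, $m\ge2$, $[m]=\{1,\dots,m\}$, $\mathrm{supp}(v)=\{i:v_i\ne0\}$. For nonempty $P\subseteq[m]$, $\Delta_P=\{v\in\mathbb F_q^m:\mathrm{supp}(v)\subseteq P\}$, $\Delta_P^c=\mathbb F_q^m\setminus\Delta_P$. $A,B,C$ are nonempty subsets of $[m]$. Let $\mathcal N_2=\{(w_2+\omega,w_3,w_1)\in\mathbb F_q^{3m}: w_1\in\Delta_A^c,\ w_2\in\Delta_B,\ w_3\in\Delta_C,\ \omega\in\{\mathbf 0,w_1\}\}$ (closed under multiplication by $\mathbb F_q^*$), let $\overline{\mathcal N}_2$ contain exactly one element of each class $\{\alpha x:\alpha\in\mathbb F_q^*\}$, $x\in\mathcal N_2$, and let $\mathcal C_{\overline{\mathcal N}_2}$ be the linear code over $\mathbb F_q$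 spanned by the rows of the $3m\times|\overline{\mathcal N}_2|$ matrix whose columns are the elements of $\overline{\mathcal N}_2$. $\mathcal C^\perp$ is the dual with respect to the Euclidean inner product. An $[n,k,d]$ code is distance-optimal if no linear $[n,k,d+1]$ code over the same field exists. *)

From HB Require Import structures.
From mathcomp Require Import all_boot all_order all_algebra.
Set Implicit Arguments. Unset Strict Implicit. Unset Printing Implicit Defensive.
Import GRing.Theory.
Local Open Scope ring_scope.

Section Codes.
Variable F : finFieldType.

Definition supp (m : nat) (v : 'rV[F]_m) : {set 'I_m} := [set i | v 0 i != 0].

Definition inDelta (m : nat) (P : {set 'I_m}) (v : 'rV[F]_m) : bool :=
  supp v \subset P.

Definition wt (n : nat) (v : 'rV[F]_n) : nat := #|supp v|.

(* A linear code of length n over F is the row space of a matrix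
   C : 'M[F]_(k, n); codewords are the row vectors in that row space. *)
Definition codeword (k n : nat) (C : 'M[F]_(k, n)) (v : 'rV[F]_n) : bool :=
  (v <= C)%MS.

Definition code_dim (k n : nat) (C : 'M[F]_(k, n)) : nat := \rank C.

(* Euclidean dual: the row space of kermx C^T is exactly
   { u | u *m C^T = 0 }, i.e. the vectors orthogonal to every row of C
   (hence to every codeword). *)
Definition dual_code (k n : nat) (C : 'M[F]_(k, n)) : 'M[F]_n := kermx C^T.

Definition min_dist (k n : nat) (C : 'M[F]_(k, n)) (d : nat) : Prop :=
  (exists2 v, codeword C v & (v != 0) && (wt v == d)) /\
  (forall v, codeword C v -> v != 0 -> (d <= wt v)%N).

Definition code_params (k0 n : nat) (C : 'M[F]_(k0, n)) (k d : nat) : Prop :=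
  code_dim C = k /\ min_dist C d.

Definition distance_optimal (k0 n : nat) (C : 'M[F]_(k0, n)) (d : nat) : Prop :=
  forall (k1 : nat) (D : 'M[F]_(k1, n)), ~ code_params D (code_dim C) d.+1.

Definition inN2 (m : nat) (A B C : {set 'I_m}) (x : 'rV[F]_(m + m + m)) : Prop :=
  exists (w1 w2 w3 om : 'rV[F]_m),
    [/\ ~~ inDelta A w1, inDelta B w2, inDelta C w3,
        (om == 0) || (om == w1) &
        x = row_mx (row_mx (w2 + om) w3) w1].

(* col : 'I_n -> F^{3m} enumerates (without repetition) a set N2bar
   containing exactly one element of each class {alpha x | alpha <> 0},
   x in N_2. *)
Definition projective_rep_system (m : nat) (A B C : {set 'I_m}) (n : nat)
    (col : 'I_n -> 'rV[F]_(m + m + m)) : Prop :=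
  [/\ forall j, inN2 A B C (col j),
      forall x, inN2 A B C x -> exists j, exists2 a : F, a != 0 & x = a *: col j &
      forall i j (a : F), a != 0 -> col i = a *: col j -> i = j].

Definition gen_matrix (m n : nat) (col : 'I_n -> 'rV[F]_(m + m + m)) :
  'M[F]_(m + m + m, n) := \matrix_(i, j) col j 0 i.

End Codes.

From HB Require Import structures.
From mathcomp Require Import all_boot all_order all_algebra.
From mathcomp Require Import mxabelem zify ring.
Set Implicit Arguments. Unset Strict Implicit. Unset Printing Implicit Defensive.
Import GRing.Theory.
Local Open Scope ring_scope.

(* The columns of the generator matrix represent the projective points of [N2], so
   [n (q - 1) = |N2|]; the parametrisation [(w1, w2, w3, omega)] of [N2] is injective
   because [w1] lies outside [Delta A], hence is no difference of vectors of
   [Delta B \subset Delta A].  Vectors outside [Delta A] span [F^m], so the columns span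
   exactly the vectors whose middle block lies in [Delta C], a space of dimension
   [2m + |C|]; this gives the dimension of the dual code.  Distinct columns are
   non-proportional, so dual codewords have weight at least 3, and the points
   [(0, 0, p)], [(0, 0, r)], [(0, 0, p + r)] of [N2] give a codeword of weight 3.  When
   [q = 2] and [A] misses a single coordinate [i0], every column has a 1 at [i0] in its
   last block, so dual weights are even, hence at least 4, and weight 4 is attained.
   Finally a binary code of the same length and dimension with minimum distance 5 would
   separate, by their syndromes, [(n/2)^2] vectors of weight 2 pairwise at distance at
   most 4, more than the [2 ^ (2m + |C|)] available syndromes. *)

Section Delta.
Variables (F : finFieldType) (m : nat).
Implicit Types (P : {set 'I_m}) (v w : 'rV[F]_m).

Definition Delta P : {set 'rV[F]_m} := [set v | inDelta P v].

Lemma inDeltaP P v : reflect (forall i, i \notin P -> v 0 i = 0) (inDelta P v).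
Proof.
apply: (iffP subsetP) => [vP i iP|vP i].
  by apply/eqP; apply: contraNT iP => vi; apply: vP; rewrite inE.
by rewrite inE; apply: contraR => /vP ->.
Qed.

Lemma inDelta0 P : inDelta P (0 : 'rV[F]_m).
Proof. by apply/inDeltaP => i _; rewrite mxE. Qed.

Lemma inDeltaD P v w : inDelta P v -> inDelta P w -> inDelta P (v + w).
Proof.
by move=> /inDeltaP vP /inDeltaP wP; apply/inDeltaP => i iP; rewrite mxE vP ?wP ?addr0.
Qed.

Lemma inDeltaN P v : inDelta P v -> inDelta P (- v).
Proof. by move=> /inDeltaP vP; apply/inDeltaP => i iP; rewrite mxE vP ?oppr0. Qed.

Lemma inDeltaZ P a v : inDelta P v -> inDelta P (a *: v).
Proof. by move=> /inDeltaP vP; apply/inDeltaP => i iP; rewrite mxE vP ?mulr0. Qed.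

Lemma notDelta_coord P v i : v 0 i != 0 -> i \notin P -> ~~ inDelta P v.
Proof. by move=> vi iP; apply: contra vi => /inDeltaP ->. Qed.

Lemma card_Delta P : #|Delta P| = (#|F| ^ #|P|)%N.
Proof.
pose row_of (f : {ffun 'I_m -> F}) : 'rV[F]_m := \row_i f i.
have row_of_inj : injective row_of.
  by move=> f g /rowP fg; apply/ffunP => i; have := fg i; rewrite !mxE.
have -> : Delta P = row_of @: pffun_on 0 P predT.
  apply/setP => v; rewrite inE; apply/idP/imsetP => [/inDeltaP vP|].
    exists [ffun i => v 0 i]; last by apply/rowP => i; rewrite !mxE ffunE.
    apply/pffun_onP; split=> //; apply/subsetP => i.
    by rewrite inE ffunE; apply: contraR => /vP ->.
  move=> [f /pffun_onP [fP _] ->]; apply/inDeltaP => i iP; rewrite mxE.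
  by apply/eqP; apply: contraR iP => fi; apply: (subsetP fP); rewrite inE.
by rewrite card_imset // card_pffun_on.
Qed.

Lemma card_Delta_compl P : #|~: Delta P| = (#|F| ^ m - #|F| ^ #|P|)%N.
Proof. by rewrite cardsCs setCK card_Delta card_mx mul1n. Qed.

Section Proper.
Variable A : {set 'I_m}.
Hypothesis hAm : A \proper [set: 'I_m].

Lemma exists_notDelta : exists u : 'rV[F]_m, ~~ inDelta A u.
Proof.
case/properP: hAm => _ [i _ iA]; exists (delta_mx 0 i).
by apply: (notDelta_coord (i := i)) => //; rewrite mxE !eqxx oner_eq0.
Qed.

Lemma notDelta_or_diff (z : 'rV[F]_m) :
  ~~ inDelta A z \/ exists x y, [/\ ~~ inDelta A x, ~~ inDelta A y & z = x - y].
Proof.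
have [zA|] := boolP (inDelta A z); last by left.
right; case/properP: hAm => _ [i _ iA]; exists (z + delta_mx 0 i), (delta_mx 0 i).
split; last by rewrite addrK.
- apply: (notDelta_coord (i := i)) => //.
  by rewrite !mxE !eqxx (inDeltaP _ _ zA) // add0r oner_eq0.
- by apply: (notDelta_coord (i := i)) => //; rewrite mxE !eqxx oner_eq0.
Qed.

Lemma notDelta_span N (f : 'rV[F]_m -> 'rV[F]_N) k (M : 'M[F]_(k, N)) :
  {morph f : x y / x - y} -> (forall z, ~~ inDelta A z -> (f z <= M)%MS) ->
  forall z, (f z <= M)%MS.
Proof.
move=> fB fM z; have [/fM //|[x [y [xA yA ->]]]] := notDelta_or_diff z.
by rewrite fB addmx_sub ?eqmx_opp ?fM.
Qed.

End Proper.
End Delta.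
Arguments Delta {F m} P.
Arguments inDelta0 {F m} P.
Arguments exists_notDelta {F m A}.

Section Weight.
Variables (F : finFieldType) (n : nat).
Implicit Types (u v : 'rV[F]_n).

Lemma wt_eq0 v : (wt v == 0%N) = (v == 0).
Proof.
rewrite cards_eq0; apply/eqP/eqP => [v0|->]; last first.
  by apply/setP => j; rewrite !inE mxE eqxx.
by apply/rowP => j; rewrite mxE; apply/eqP; apply: contraT => vj; rewrite -(in_set0 j) -v0 inE.
Qed.

Lemma min_dist_intro k (D : 'M[F]_(k, n)) d : (0 < d)%N ->
  (exists2 v, codeword D v & wt v = d) ->
  (forall v, codeword D v -> v != 0 -> (d <= wt v)%N) -> min_dist D d.
Proof.
move=> d_gt0 [v cv wv] lb; split=> //; exists v => //.
by rewrite wv eqxx andbT -wt_eq0 wv -lt0n.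
Qed.

Lemma wt_sub_le u v : (wt (u - v) <= wt u + wt v)%N.
Proof.
apply: leq_trans (leq_card_setU (supp u) (supp v)); apply: subset_leq_card.
apply/subsetP => j; rewrite !inE !mxE; apply: contraR.
by rewrite negb_or !negbK => /andP [/eqP -> /eqP ->]; rewrite subr0.
Qed.

Lemma wt_delta2_le (i j : 'I_n) :
  (wt (delta_mx 0%R i + delta_mx 0%R j : 'rV[F]_n) <= 2)%N.
Proof.
apply: leq_trans (_ : #|[set i; j]| <= 2)%N; last by rewrite cards2; case: (_ != _).
apply: subset_leq_card; apply/subsetP => l; rewrite !inE !mxE.
by apply: contraR; rewrite negb_or => /andP [/negbTE -> /negbTE ->]; rewrite addr0.
Qed.

Lemma card_le_codim k (D : 'M[F]_(k, n)) (S : {set 'rV[F]_n}) :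
  {in S &, forall u v, codeword D (u - v) -> u = v} ->
  (#|S| <= #|F| ^ (n - \rank D))%N.
Proof.
move=> Sinj; rewrite -mxrank_coker -card_rowg.
rewrite -(card_in_imset (f := mulmxr (cokermx D))); last first.
  move=> u v uS vS /= /eqP; rewrite -subr_eq0 -mulmxBl -submxE.
  exact: Sinj.
by apply: subset_leq_card; apply/subsetP => _ /imsetP [u _ ->]; rewrite inE submxMl.
Qed.

(* The [n./2 ^ 2] vectors [e_i + e_(n./2 + j)] are pairwise at distance at most 4, hence
   have distinct syndromes. *)
Lemma half_length_sq_le_codim k (D : 'M[F]_(k, n)) :
  (forall v, codeword D v -> v != 0 -> (5 <= wt v)%N) ->
  (n./2 * n./2 <= #|F| ^ (n - \rank D))%N.
Proof.
move=> D5; set h := n./2.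
have lt_left (i : 'I_h) : (i < n)%N by have := ltn_ord i; rewrite /h; lia.
have lt_right (j : 'I_h) : (h + j < n)%N by have := ltn_ord j; rewrite /h; lia.
pose u (t : 'I_h * 'I_h) : 'rV[F]_n :=
  delta_mx 0 (Ordinal (lt_left t.1)) + delta_mx 0 (Ordinal (lt_right t.2)).
have eq_left (i i' : 'I_h) : (Ordinal (lt_left i) == Ordinal (lt_left i')) = (i == i').
  by rewrite -val_eqE.
have eq_right (j j' : 'I_h) : (Ordinal (lt_right j) == Ordinal (lt_right j')) = (j == j').
  by rewrite -val_eqE /= eqn_add2l.
have neq_left_right (i j : 'I_h) : (Ordinal (lt_left i) == Ordinal (lt_right j)) = false.
  by rewrite -val_eqE /= ltn_eqF // (leq_trans (ltn_ord i)) ?leq_addr.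
have u_left t (i : 'I_h) : u t 0 (Ordinal (lt_left i)) = (i == t.1)%:R.
  by rewrite !mxE /= eq_left neq_left_right addr0.
have u_right t (j : 'I_h) : u t 0 (Ordinal (lt_right j)) = (j == t.2)%:R.
  rewrite !mxE /= eq_right -val_eqE /= gtn_eqF ?add0r //.
  by rewrite (leq_trans (ltn_ord t.1)) ?leq_addr.
have u_inj : injective u.
  have natr_eq1 (b : bool) : (b%:R : F) = 1 -> b by case: b => // /esym/eqP; rewrite oner_eq0.
  move=> [i j] [i' j'] e; have := u_left (i', j') i; have := u_right (i', j') j.
  by rewrite -e u_left u_right /= !eqxx => /esym/natr_eq1/eqP -> /esym/natr_eq1/eqP ->.
have := card_le_codim (S := u @: setT) _.
rewrite card_imset // cardsT card_prod card_ord; apply.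
move=> _ _ /imsetP [t _ ->] /imsetP [t' _ ->] cw; apply/eqP; rewrite -subr_eq0.
have small : (wt (u t - u t') <= 2 + 2)%N.
  by rewrite (leq_trans (wt_sub_le _ _)) // leq_add ?wt_delta2_le.
by apply: contraTT small => /(D5 _ cw); rewrite -ltnNge.
Qed.

End Weight.

Section Binary.
Variable F : finFieldType.
Hypothesis F2 : #|F| = 2%N.

Lemma binary_eq1 (x : F) : x != 0 -> x = 1.
Proof.
have F01 : [set 0; 1] = [set: F].
  by apply/eqP; rewrite eqEcard subsetT cardsT cards2 F2 eq_sym oner_eq0.
by move=> x0; have : x \in [set: F] by []; rewrite -F01 !inE (negbTE x0) => /eqP.
Qed.

Lemma binary_add1 : 1 + 1 = 0 :> F.
Proof.
apply/eqP; apply: contraT => /binary_eq1 /eqP.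
by rewrite -subr_eq0 addrK oner_eq0.
Qed.

Lemma binary_addvv k n (v : 'M[F]_(k, n)) : v + v = 0.
Proof. by rewrite -[v]scale1r -scalerDl binary_add1 scale0r. Qed.

Lemma binary_natr k : k%:R = (odd k)%:R :> F.
Proof.
elim: k => // k IHk; rewrite -addn1 natrD IHk oddD addbT.
by case: (odd k); rewrite ?binary_add1 ?add0r.
Qed.

End Binary.

Lemma exists_neq0_neqN1 (F : finFieldType) :
  (2 < #|F|)%N -> exists2 c : F, c != 0 & 1 + c != 0.
Proof.
move=> F_gt2; have : ~~ ([set: F] \subset [set 0; -1]).
  apply: contraL F_gt2 => /subset_leq_card; rewrite cardsT cards2 -leqNgt.
  by move/leq_trans; apply; case: (_ != _).
case/subsetPn => c _; rewrite !inE negb_or => /andP [c0 cN1]; exists c => //.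
by apply: contra cN1; rewrite addrC addr_eq0.
Qed.

Section ProjectiveSystem.
Variables (F : finFieldType) (m n : nat) (col : 'I_n -> 'rV[F]_(m + m + m)).
Hypothesis col_neq0 : forall j, col j != 0.
Hypothesis col_proj : forall i j (a : F), a != 0 -> col i = a *: col j -> i = j.

Local Notation G := (gen_matrix col).
Local Notation Cd := (dual_code G).

Lemma row_gen_tr j : row j G^T = col j.
Proof. by apply/rowP => k; rewrite !mxE. Qed.

Lemma codeword_dualE v : codeword Cd v = (\sum_j v 0 j *: col j == 0).
Proof.
rewrite /codeword /dual_code sub_kermx mulmx_sum_row.
by under eq_bigr => j _ do rewrite row_gen_tr.
Qed.

Lemma dual_code_dim : code_dim Cd = (n - \rank G^T)%N.
Proof. exact: mxrank_ker. Qed.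

Definition scaled_cols : {set 'rV[F]_(m + m + m)} :=
  [set t.2 *: col t.1 | t in setX [set: 'I_n] [set~ 0]].

Lemma scaled_colsP x :
  reflect (exists j, exists2 a, a != 0 & x = a *: col j) (x \in scaled_cols).
Proof.
apply: (iffP imsetP) => [[[j a]]|[j [a a0 ->]]]; last by exists (j, a); rewrite ?inE.
by rewrite !inE /= => a0 ->; exists j, a.
Qed.

Lemma scaled_cols_sub x : x \in scaled_cols -> (x <= G^T)%MS.
Proof. by case/scaled_colsP => j [a _ ->]; rewrite scalemx_sub // -row_gen_tr row_sub. Qed.

Lemma card_scaled_cols : #|scaled_cols| = (n * (#|F| - 1))%N.
Proof.
rewrite card_in_imset; first by rewrite cardsX cardsT card_ord cardsC1 subn1.
move=> [i a] [j b]; rewrite !inE /= => a0 b0 e.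
have ij : i = j.
  apply: (@col_proj i j (a^-1 * b)); first by rewrite mulf_neq0 ?invr_eq0.
  by rewrite -scalerA -e scalerA mulVf // scale1r.
subst j; congr (_, _); apply/eqP; rewrite -subr_eq0.
by move/eqP: e; rewrite -subr_eq0 -scalerBl scaler_eq0 (negbTE (col_neq0 i)) orbF.
Qed.

Lemma dual_relation_supp v : codeword Cd v -> \sum_(j in supp v) v 0 j *: col j = 0.
Proof.
rewrite codeword_dualE => /eqP rel; rewrite -[RHS]rel [RHS](bigID (mem (supp v))) /=.
by rewrite [X in _ + X]big1 ?addr0 // => j; rewrite inE negbK => /eqP ->; rewrite scale0r.
Qed.

Lemma dual_wt_ge3 v : codeword Cd v -> v != 0 -> (3 <= wt v)%N.
Proof.
move=> /dual_relation_supp rel v0; rewrite leqNgt; apply/negP => small.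
have : (wt v == 1%N) || (wt v == 2%N).
  by move: small v0; rewrite -wt_eq0; case: (wt v) => [|[|[|]]].
case/orP => [/cards1P [i supp_i]|/cards2P [i [j [ij supp_ij]]]].
  have vi : v 0 i != 0 by have := set11 i; rewrite -supp_i inE.
  move: rel; rewrite supp_i big_set1 => /eqP; rewrite scaler_eq0.
  by rewrite (negbTE vi) (negbTE (col_neq0 i)).
have vi : v 0 i != 0 by have := set21 i j; rewrite -supp_ij inE.
have vj : v 0 j != 0 by have := set22 i j; rewrite -supp_ij inE.
move: rel; rewrite supp_ij big_setU1 ?inE // big_set1 => /eqP; rewrite addr_eq0 => /eqP e.
suff : i = j by apply/eqP.
apply: (@col_proj i j (- (v 0 i)^-1 * v 0 j)); first by rewrite mulf_neq0 ?oppr_eq0 ?invr_eq0.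
by rewrite mulNr scaleNr -scalerA -scalerN -e scalerA mulVf // scale1r.
Qed.

Lemma dual_codeword_of_relation (s : seq 'I_n) (c : 'I_n -> F) :
  uniq s -> {in s, forall j, c j != 0} -> \sum_(j <- s) c j *: col j = 0 ->
  exists2 v, codeword Cd v & wt v = size s.
Proof.
move=> s_uniq c_neq0 rel; pose v : 'rV[F]_n := \row_j (if j \in s then c j else 0).
exists v.
  rewrite codeword_dualE; apply/eqP; rewrite -[RHS]rel (big_uniq _ s_uniq) /= [RHS]big_mkcond.
  by apply/eq_bigr => j _; rewrite mxE; case: ifP; rewrite ?scale0r.
rewrite /wt (_ : supp v = [set j in s]); first by rewrite cardsE; apply/card_uniqP.
by apply/setP => j; rewrite !inE mxE; case: ifP => [/c_neq0|]; rewrite ?eqxx.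
Qed.

Lemma dual_weight3_of_pair x y :
  x \in scaled_cols -> y \in scaled_cols -> x + y \in scaled_cols ->
  (forall a b, a *: x + b *: y = 0 -> a = 0 /\ b = 0) ->
  exists2 v, codeword Cd v & wt v = 3%N.
Proof.
move=> /scaled_colsP [j1 [a1 a1_0 ex]] /scaled_colsP [j2 [a2 a2_0 ey]].
move=> /scaled_colsP [j3 [a3 a3_0 exy]] indep.
have j12 : j1 != j2.
  apply/eqP => e; subst j2; have /indep [a2_eq0 _] : a2 *: x + (- a1) *: y = 0.
    by rewrite ex ey !scalerA mulNr scaleNr mulrC subrr.
  by rewrite a2_eq0 eqxx in a2_0.
have j13 : j1 != j3.
  apply/eqP => e; subst j3; have /indep [_ /eqP] : (a3 - a1) *: x + (- a1) *: y = 0.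
    by rewrite scalerBl scaleNr -addrA -opprD -scalerDr exy ex !scalerA mulrC subrr.
  by rewrite oppr_eq0 (negbTE a1_0).
have j23 : j2 != j3.
  apply/eqP => e; subst j3; have /indep [/eqP] : (- a2) *: x + (a3 - a2) *: y = 0.
    by rewrite scalerBl scaleNr addrCA -opprD -scalerDr exy ey !scalerA mulrC subrr.
  by rewrite oppr_eq0 (negbTE a2_0).
have [j21 j31 j32] : [/\ (j2 == j1) = false, (j3 == j1) = false & (j3 == j2) = false].
  by rewrite ![_ == j1]eq_sym [j3 == j2]eq_sym !(negbTE j12, negbTE j13, negbTE j23).
apply: (@dual_codeword_of_relation [:: j1; j2; j3]
   (fun j => if j == j1 then a1 else if j == j2 then a2 else - a3)).
- by rewrite /= !inE negb_or j12 j13 j23.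
- by move=> j; rewrite !inE => /or3P [] /eqP ->; rewrite ?j21 ?j31 ?j32 ?eqxx ?oppr_eq0.
- rewrite !big_cons big_nil eqxx j21 eqxx j31 j32 addr0 scaleNr -ex -ey -exy.
  by rewrite addrA subrr.
Qed.

Section BinaryDual.
Hypothesis F2 : #|F| = 2%N.

(* A coordinate equal to 1 in every column is an all-ones parity check of [Cd]. *)
Lemma dual_wt_even (r : 'I_(m + m + m)) v :
  (forall j, col j 0 r = 1) -> codeword Cd v -> ~~ odd (wt v).
Proof.
move=> col_r /dual_relation_supp /rowP /(_ r); rewrite summxE mxE.
under eq_bigr => j /[!inE] vj do rewrite mxE col_r mulr1 (binary_eq1 F2 vj).
rewrite sumr_const binary_natr //; case: (odd _) => //= /eqP.
by rewrite oner_eq0.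
Qed.

Lemma binary_dual_codeword_of_sum (xs : seq 'rV[F]_(m + m + m)) :
  uniq xs -> {subset xs <= scaled_cols} -> \sum_(x <- xs) x = 0 ->
  exists2 v, codeword Cd v & wt v = size xs.
Proof.
move=> xs_uniq xs_cols rel.
have [s xs_s] : exists s, xs = map col s.
  elim: xs xs_cols {xs_uniq rel} => [|x xs IHxs] xs_cols; first by exists [::].
  have [j [a /(binary_eq1 F2) -> ->]] := scaled_colsP _ (xs_cols x (mem_head _ _)).
  have [s ->] : exists s, xs = map col s.
    by apply: IHxs => y yxs; apply: xs_cols; rewrite inE yxs orbT.
  by exists (j :: s); rewrite scale1r.
rewrite xs_s size_map in xs_uniq rel *.
apply: (@dual_codeword_of_relation s (fun _ => 1)).
- exact: map_uniq xs_uniq.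
- by move=> j _; rewrite oner_eq0.
- by rewrite big_map in rel; rewrite -[RHS]rel; apply: eq_bigr => j _; rewrite scale1r.
Qed.

End BinaryDual.
End ProjectiveSystem.

Section N2.
Variables (F : finFieldType) (m : nat) (A B C : {set 'I_m}).
Local Notation q := #|F|.

Definition row3 (x y z : 'rV[F]_m) : 'rV[F]_(m + m + m) := row_mx (row_mx x y) z.

Lemma row3_inj (x y z x' y' z' : 'rV[F]_m) :
  row3 x y z = row3 x' y' z' -> [/\ x = x', y = y' & z = z'].
Proof. by move=> /eq_row_mx [/eq_row_mx [-> ->] ->]. Qed.

Lemma row3D (x y z x' y' z' : 'rV[F]_m) :
  row3 x y z + row3 x' y' z' = row3 (x + x') (y + y') (z + z').
Proof. by rewrite /row3 !add_row_mx. Qed.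

Lemma row3B (x y z x' y' z' : 'rV[F]_m) :
  row3 x y z - row3 x' y' z' = row3 (x - x') (y - y') (z - z').
Proof. by rewrite /row3 !opp_row_mx row3D. Qed.

Lemma row3Z a (x y z : 'rV[F]_m) : a *: row3 x y z = row3 (a *: x) (a *: y) (a *: z).
Proof. by rewrite /row3 !scale_row_mx. Qed.

Lemma row3_0 : row3 0 0 0 = 0.
Proof. by rewrite /row3 !row_mx0. Qed.

Lemma row3_split (v : 'rV[F]_(m + m + m)) :
  v = row3 (lsubmx (lsubmx v)) (rsubmx (lsubmx v)) (rsubmx v).
Proof. by rewrite /row3 !hsubmxK. Qed.

Lemma row3E3 (x y z : 'rV[F]_m) k : row3 x y z 0 (rshift (m + m) k) = z 0 k.
Proof. exact: row_mxEr. Qed.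

(* The boolean selects [omega = w1] rather than [omega = 0]. *)
Definition N2_of (t : 'rV[F]_m * 'rV[F]_m * 'rV[F]_m * bool) : 'rV[F]_(m + m + m) :=
  row3 (t.1.1.2 + (if t.2 then t.1.1.1 else 0)) t.1.2 t.1.1.1.

Definition N2set : {set 'rV[F]_(m + m + m)} :=
  N2_of @: setX (setX (setX (~: Delta A) (Delta B)) (Delta C)) [set: bool].

Lemma mem_N2set w1 w2 w3 (b : bool) :
  ~~ inDelta A w1 -> inDelta B w2 -> inDelta C w3 ->
  row3 (w2 + (if b then w1 else 0)) w3 w1 \in N2set.
Proof.
by move=> w1A w2B w3C; apply/imsetP; exists (w1, w2, w3, b); rewrite // !inE w1A w2B w3C.
Qed.

Lemma N2set_last w : ~~ inDelta A w -> row3 0 0 w \in N2set.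
Proof.
by move=> wA; have := mem_N2set false wA (inDelta0 B) (inDelta0 C); rewrite addr0.
Qed.

Lemma N2set_neq0 x : x \in N2set -> x != 0.
Proof.
move=> /imsetP [[[[w1 w2] w3] b]]; rewrite !inE /= andbT => /andP [/andP [w1A _] _] ->.
rewrite /N2_of /= -row3_0; apply: contraNneq w1A => /row3_inj [_ _ ->]; apply: inDelta0.
Qed.

Lemma inN2_N2set x : inN2 A B C x <-> x \in N2set.
Proof.
split=> [[w1 [w2 [w3 [om [w1A w2B w3C /orP om_w1 ->]]]]]|].
  by case: om_w1 => /eqP ->; [apply: (mem_N2set false) | apply: (mem_N2set true)].
move=> /imsetP [[[[w1 w2] w3] b]].
rewrite !inE /= andbT => /andP [/andP [w1A w2B] w3C] ->.
by exists w1, w2, w3, (if b then w1 else 0); split; case: b; rewrite ?eqxx ?orbT.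
Qed.

Lemma N2setZ a x : a != 0 -> x \in N2set -> a *: x \in N2set.
Proof.
move=> a0 /imsetP [[[[w1 w2] w3] b]].
rewrite !inE /= andbT => /andP [/andP [w1A w2B] w3C] ->.
rewrite /N2_of /= row3Z scalerDr (fun_if ( *:%R a)) scaler0.
apply: mem_N2set; try exact: inDeltaZ.
by apply: contra w1A => /(inDeltaZ a^-1); rewrite scalerA mulVf // scale1r.
Qed.

Lemma card_N2set : B \subset A ->
  #|N2set| = ((q ^ m - q ^ #|A|) * q ^ #|B| * q ^ #|C| * 2)%N.
Proof.
move=> hBA; rewrite card_in_imset; last first.
  move=> [[[w1 w2] w3] b] [[[w1' w2'] w3'] b']; rewrite !inE /= !andbT.
  move=> /andP [/andP [w1A w2B] _] /andP [/andP [_ w2'B] _] /=.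
  rewrite /N2_of /= => /row3_inj [e12 <- e1]; subst w1'.
  have notB u : inDelta B u -> u != w1.
    by move=> uB; apply: contraNneq w1A => <-; apply: subset_trans uB hBA.
  case: b b' e12 => [] [] /= e12; rewrite ?addr0 in e12.
  - by rewrite (addIr _ e12).
  - have /eqP[] := notB (w2' - w2) (inDeltaD w2'B (inDeltaN w2B)).
    by rewrite -e12 addrAC subrr add0r.
  - have /eqP[] := notB (w2 - w2') (inDeltaD w2B (inDeltaN w2'B)).
    by rewrite e12 addrAC subrr add0r.
  - by rewrite e12.
by rewrite !cardsX cardsT card_bool card_Delta_compl !card_Delta.
Qed.

Definition mid_Delta : {set 'rV[F]_(m + m + m)} :=
  [set v | inDelta C (rsubmx (lsubmx v))].

Lemma N2set_mid_Delta x : x \in N2set -> x \in mid_Delta.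
Proof.
move=> /imsetP [[[[w1 w2] w3] b]]; rewrite !inE /= andbT => /andP [/andP [_ _] w3C] ->.
by rewrite /N2_of /row3 row_mxKl row_mxKr.
Qed.

Lemma card_mid_Delta : #|mid_Delta| = (q ^ (m + #|C| + m))%N.
Proof.
pose f (t : 'rV[F]_m * 'rV[F]_m * 'rV[F]_m) := row3 t.1.1 t.1.2 t.2.
have f_inj : injective f by move=> [[x y] z] [[x' y'] z'] /row3_inj [/= -> -> ->].
have -> : mid_Delta = f @: setX (setX [set: 'rV[F]_m] (Delta C)) [set: 'rV[F]_m].
  apply/setP => v; rewrite /mid_Delta inE; apply/idP/imsetP => [vC|[[[x y] z]]].
    exists (lsubmx (lsubmx v), rsubmx (lsubmx v), rsubmx v); last exact: row3_split.
    by rewrite !inE /= vC.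
  by rewrite !inE /= andbT => yC ->; rewrite /f /row3 /= row_mxKl row_mxKr.
by rewrite card_imset // !cardsX !cardsT card_Delta card_mx mul1n -!expnD.
Qed.

End N2.
Arguments N2set {F m} A B C.
Arguments mid_Delta {F m} C.

Section DualCode.
Variables (F : finFieldType) (m : nat) (A B C : {set 'I_m}).
Hypotheses (hBA : B \subset A) (hAm : A \proper [set: 'I_m]).
Variables (n : nat) (col : 'I_n -> 'rV[F]_(m + m + m)).
Hypothesis hcol : projective_rep_system A B C col.
Local Notation q := #|F|.
Local Notation G := (gen_matrix col).
Local Notation Cd := (dual_code G).

Lemma N2set_scaled_cols : N2set A B C = scaled_cols col.
Proof.
case: hcol => col_N2 N2_col _; apply/setP => x; apply/idP/idP.
  by move=> /inN2_N2set /N2_col [j [a a0 ->]]; apply/scaled_colsP; exists j, a.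
by case/scaled_colsP => j [a a0 ->]; apply: N2setZ a0 _; apply/inN2_N2set/col_N2.
Qed.

Lemma col_N2set j : col j \in N2set A B C.
Proof. by case: hcol => col_N2 _ _; apply/inN2_N2set/col_N2. Qed.

Lemma col_neq0 j : col j != 0.
Proof. exact/N2set_neq0/col_N2set. Qed.

Lemma col_proj i j (a : F) : a != 0 -> col i = a *: col j -> i = j.
Proof. by case: hcol => _ _; apply. Qed.

Lemma N2set_sub x : x \in N2set A B C -> (x <= G^T)%MS.
Proof. by rewrite N2set_scaled_cols; apply: scaled_cols_sub. Qed.

Lemma sub_gen_tr v : (v <= G^T)%MS = (v \in mid_Delta C).
Proof.
apply/idP/idP => [/submxP [u ->]|].
  rewrite mulmx_sum_row; apply: (big_ind (fun w => w \in mid_Delta C)) => [|x y|j _].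
  - by rewrite inE !linear0 inDelta0.
  - by rewrite !inE !linearD; apply: inDeltaD.
  have := N2set_mid_Delta (col_N2set j).
  by rewrite row_gen_tr !inE !linearZ; apply: inDeltaZ.
rewrite inE => vC; rewrite [v]row3_split.
set x := lsubmx _; set y := rsubmx (lsubmx v); set z := rsubmx v.
have last_sub w : (row3 0 0 w <= G^T)%MS.
  apply: (notDelta_span hAm (f := row3 0 0)) => [w1 w2|w1 w1A].
    by rewrite row3B subr0.
  exact/N2set_sub/N2set_last.
have first_sub w : (row3 w 0 0 <= G^T)%MS.
  apply: (notDelta_span hAm (f := fun w => row3 w 0 0)) => [w1 w2|w1 w1A].
    by rewrite row3B subr0.
  have -> : row3 w1 0 0 = row3 (0 + w1) 0 w1 - row3 0 0 w1.
    by rewrite row3B !subr0 add0r subrr.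
  rewrite addmx_sub ?eqmx_opp ?last_sub //; apply: N2set_sub.
  exact: (mem_N2set true w1A (inDelta0 B) (inDelta0 C)).
have mid_sub : (row3 0 y 0 <= G^T)%MS.
  have [u0 u0A] : exists u0 : 'rV[F]_m, ~~ inDelta A u0 := exists_notDelta hAm.
  have -> : row3 0 y 0 = row3 (0 + 0) y u0 - row3 0 0 u0.
    by rewrite row3B !subr0 addr0 subrr.
  rewrite addmx_sub ?eqmx_opp ?last_sub //; apply: N2set_sub.
  exact: (mem_N2set false u0A (inDelta0 B) vC).
have -> : row3 x y z = row3 x 0 0 + row3 0 y 0 + row3 0 0 z.
  by rewrite !row3D !addr0 !add0r.
by rewrite !addmx_sub.
Qed.

Lemma rank_gen_tr : \rank G^T = (m + #|C| + m)%N.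
Proof.
apply/eqP; rewrite -(eqn_exp2l _ _ (card_finNzRing_gt1 F)) -card_rowg -card_mid_Delta.
by apply/eqP/eq_card => v; rewrite inE sub_gen_tr.
Qed.

Lemma dual_dim : code_dim Cd = (n - 2 * m - #|C|)%N /\ (2 * m + #|C| <= n)%N.
Proof.
have e : (m + #|C| + m = 2 * m + #|C|)%N by rewrite addnAC addnn mul2n.
by rewrite dual_code_dim rank_gen_tr e subnDA -e -rank_gen_tr rank_leq_row.
Qed.

Lemma length_N2 : (n * (q - 1) = 2 * q ^ (#|B| + #|C|) * (q ^ m - q ^ #|A|))%N.
Proof.
by rewrite -(card_scaled_cols col_neq0 col_proj) -N2set_scaled_cols card_N2set // expnD; ring.
Qed.

Lemma dual_weight3_of_coords (i j : 'I_m) (c : F) :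
  i \notin A -> j != i -> (c != 0) || (j \notin A) -> (1 + c != 0) || (j \notin A) ->
  exists2 v, codeword Cd v & wt v = 3%N.
Proof.
move=> iA ji c_j c1_j; set p : 'rV[F]_m := delta_mx 0 i.
set r : 'rV[F]_m := c *: delta_mx 0 i + delta_mx 0 j.
have [pi pj ri rj] : [/\ p 0 i = 1, p 0 j = 0, r 0 i = c & r 0 j = 1].
  by rewrite !mxE !eqxx (negbTE ji) eq_sym (negbTE ji) /= mulr1 mulr0 addr0 add0r.
clearbody p r.
have notA_i_or_j (w : 'rV[F]_m) :
    (w 0 i != 0) || (w 0 j != 0) && (j \notin A) -> ~~ inDelta A w.
  case/orP => [wi|/andP [wj jA]]; first exact: notDelta_coord wi iA.
  exact: notDelta_coord wj jA.
apply: (dual_weight3_of_pair (x := row3 0 0 p) (y := row3 0 0 r)).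
- by rewrite -N2set_scaled_cols N2set_last // notA_i_or_j // pi oner_eq0.
- by rewrite -N2set_scaled_cols N2set_last // notA_i_or_j // ri rj oner_eq0.
- have [pri prj] : (p + r) 0 i = 1 + c /\ (p + r) 0 j = 1.
    by rewrite !mxE pi pj ri rj add0r.
  rewrite -N2set_scaled_cols row3D !addr0 N2set_last // notA_i_or_j //.
  by rewrite pri prj oner_eq0.
- move=> a b; rewrite !row3Z !scaler0 row3D !addr0 -row3_0 => /row3_inj [_ _ /rowP rel].
  have := rel j; have := rel i; rewrite !mxE pi pj ri rj !mulr0 !mulr1 add0r => rel_i b0.
  by rewrite b0 mul0r addr0 in rel_i.
Qed.

Lemma dual_weight3_exists : (2 <= m)%N ->
  (2 < q)%N \/ (q = 2%N /\ (#|A| <= m - 2)%N) -> exists2 v, codeword Cd v & wt v = 3%N.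
Proof.
move=> m_ge2 [q_gt2|[_ A_small]].
  case/properP: hAm => _ [i _ iA].
  have [j ji] : exists j : 'I_m, j != i.
    have /card_gt1P [x [y [_ _ xy]]] : (1 < #|'I_m|)%N by rewrite card_ord.
    by case: (eqVneq x i) => [xi|]; [exists y; rewrite -xi eq_sym | exists x].
  have [c c0 c1] := exists_neq0_neqN1 q_gt2.
  by apply: (dual_weight3_of_coords (c := c) iA ji); rewrite ?c0 ?c1.
have /card_gt1P [i [j [iA jA ij]]] : (1 < #|~: A|)%N.
  by rewrite -(leq_add2l #|A|) cardsC card_ord addnC -leq_subRL.
rewrite !inE in iA jA.
by apply: (dual_weight3_of_coords (j := j) (c := 0) iA); rewrite ?jA ?orbT // eq_sym.
Qed.

Section BinaryCase.
Hypothesis F2 : q = 2%N.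
Variable i0 : 'I_m.
Hypothesis hi0 : ~: A = [set i0].

Lemma col_coord_i0 j : col j 0 (rshift (m + m) i0) = 1.
Proof.
have /imsetP [[[[w1 w2] w3] b]] := col_N2set j.
rewrite !inE /= andbT => /andP [/andP [w1A _] _] ->; rewrite row3E3.
apply: binary_eq1 => //; apply: contra w1A => /eqP w1_i0; apply/inDeltaP => k.
by rewrite -in_setC hi0 inE => /eqP ->.
Qed.

Lemma dual_wt_ge4 v : codeword Cd v -> v != 0 -> (4 <= wt v)%N.
Proof.
move=> cv v0; have := dual_wt_even F2 col_coord_i0 cv.
by have := dual_wt_ge3 col_neq0 col_proj cv v0; case: (wt v) => [|[|[|[|]]]].
Qed.

(* The four columns [row3 x 0 e], [x] in the [F_2]-span of [b] and [e], sum to zero. *)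
Lemma dual_weight4_exists k : k \in B -> exists2 v, codeword Cd v & wt v = 4%N.
Proof.
move=> kB; set e : 'rV[F]_m := delta_mx 0 i0; set b : 'rV[F]_m := delta_mx 0 k.
have ki0 : (k == i0) = false.
  by apply: contraTF (subsetP hBA _ kB) => /eqP ->; rewrite -in_setC hi0 set11.
have eA : ~~ inDelta A e.
  by apply: (notDelta_coord (i := i0)); rewrite ?mxE ?eqxx ?oner_eq0 // -in_setC hi0 set11.
have bB : inDelta B b.
  by apply/inDeltaP => l lB; rewrite mxE eqxx /=; case: eqP => // lk; rewrite lk kB in lB.
pose ts := [:: (0, false); (b, false); (0, true); (b, true)].
pose xs := [seq row3 (t.1 + (if t.2 then e else 0)) 0 e | t <- ts].
apply: (binary_dual_codeword_of_sum F2 (xs := xs)) => //.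
- pose coords (x : 'rV[F]_(m + m + m)) :=
    (x 0 (lshift m (lshift m k)), x 0 (lshift m (lshift m i0))).
  apply: (map_uniq (f := coords)).
  rewrite /= /coords /row3 !row_mxEl !mxE !eqxx ki0 eq_sym ki0 /=.
  by rewrite !addr0 !add0r !inE !xpair_eqE !eqxx /= !(eq_sym (0 : F)) oner_eq0.
- move=> x /mapP [t t_ts ->]; rewrite -N2set_scaled_cols.
  apply: mem_N2set => //; last exact: inDelta0.
  by move: t_ts; rewrite !inE => /or4P [] /eqP -> //=; rewrite inDelta0.
- rewrite !big_cons big_nil /= !addr0 !add0r !row3D ?add0r ?addr0.
  by rewrite [b + _]addrA [e + (e + _)]addrA !(binary_addvv F2) row3_0.
Qed.

Lemma length_binary : n = (2 ^ (m + #|B| + #|C|))%N.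
Proof.
have [hA1 m_gt0] : #|A| = m.-1 /\ (0 < m)%N.
  have := cardsC A; rewrite hi0 cards1 card_ord addn1 => e.
  by rewrite -[in m.-1]e -[in (0 < m)%N]e.
have := length_N2; rewrite F2 muln1 hA1 => ->.
have -> : (2 ^ m - 2 ^ m.-1 = 2 ^ m.-1)%N.
  by rewrite -[in (2 ^ m)%N](prednK m_gt0) expnS mul2n -addnn addnK.
by rewrite -expnS -!expnD addSnnS prednK // addnC addnA.
Qed.

Lemma dual_distance_optimal :
  (0 < #|B|)%N -> (0 < #|C|)%N -> distance_optimal Cd 4%N.
Proof.
move=> B_gt0 C_gt0 k D [rankD [_ D5]]; have hn := length_binary.
have [dimC le_n] := dual_dim.
have := half_length_sq_le_codim D5.
rewrite -/(code_dim D) rankD dimC -subnDA subKn // F2 hn.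
have -> : (m + #|B| + #|C| = (m + #|B| + #|C|).-1.+1)%N by lia.
rewrite expnS mul2n doubleK -expnD leq_exp2l //; lia.
Qed.

End BinaryCase.

End DualCode.

Theorem mainTheorem15 (F : finFieldType) (m : nat) (A B C : {set 'I_m})
  (hm : (2 <= m)%N)
  (hA0 : A != set0) (hB0 : B != set0) (hC0 : C != set0)
  (hBA : B \subset A) (hAm : A \proper [set: 'I_m])
  (n : nat) (col : 'I_n -> 'rV[F]_(m + m + m))
  (hcol : projective_rep_system A B C col) :
  let q := #|F| in
  let Cd := dual_code (gen_matrix col) in
  ((2 < q)%N \/ (q = 2%N /\ (#|A| <= m - 2)%N) ->
     n = ((2 * q ^ (#|B| + #|C|) * (q ^ m - q ^ #|A|)) %/ (q - 1))%N /\
     code_params Cd (n - 2 * m - #|C|)%N 3%N)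
  /\
  (q = 2%N -> #|A| = (m - 1)%N ->
     n = (2 ^ (m + #|B| + #|C|))%N /\
     code_params Cd (2 ^ (m + #|B| + #|C|) - 2 * m - #|C|)%N 4%N /\
     distance_optimal Cd 4%N).
Proof.
move=> q Cd; rewrite {}/q {}/Cd; have [dimCd _] := dual_dim hAm hcol.
have [B_gt0 C_gt0] : (0 < #|B|)%N /\ (0 < #|C|)%N by rewrite !card_gt0.
split=> [hq | q2 hA1].
  split; first by rewrite -(length_N2 hBA hcol) mulnK // subn_gt0 card_finNzRing_gt1.
  split=> //; apply: min_dist_intro => //; first exact: (dual_weight3_exists hAm hcol hm hq).
  exact: (dual_wt_ge3 (col_neq0 hcol) (col_proj hcol)).
have [i0 hi0] : exists i0, ~: A = [set i0].
  by apply/cards1P; have := cardsC A; rewrite card_ord; lia.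
have hn := length_binary hBA hcol q2 hi0.
split=> //; split; last exact: (dual_distance_optimal hBA hAm hcol q2 hi0 B_gt0 C_gt0).
split; first by rewrite dimCd hn.
apply: min_dist_intro => //; last exact: (dual_wt_ge4 hcol q2 hi0).
by case/set0Pn: hB0 => k kB; exact: (dual_weight4_exists hBA hcol q2 hi0 kB).
Qed.
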